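(* Let $N\ge 2$, $x_0<x_1<\dots<x_N$, $h_i=x_i-x_{i-1}$, and let $f_1,\dots,f_N\in\mathbb{R}$ be a histogram. Let $I=[x_0,x_N]$, $I_i=[x_{i-1},x_i)$ for $i<N$, $I_N=[x_{N-1},x_N]$, and for $i=1,\dots,N$ let $L_i(x)=a_ix+b_i$ with $a_i=\frac{x_i-x_{i-1}}{x_N-x_0}$, $b_i=\frac{x_Nx_{i-1}-x_0x_i}{x_N-x_0}$, let $\alpha_i$ be arbitrary with $|\alpha_i|<1$, and let $q_i:I\to\mathbb{R}$ be Lipschitz continuous. Let $f$ be the unique bounded function on $I$ with $f(x)=\alpha_if(L_i^{-1}(x))+q_i(L_i^{-1}(x))$ for $x\in I_i$, $i=1,\dots,N$ (the fractal function of the IFS with maps $L_i(x)$, $F_i(x,y)=\alpha_iy+q_i(x)$). Then $\int_{x_{i-1}}^{x_i}f(x)\,dx=h_if_i$ for all $i=1,\dots,N$ if and only if $$\int_Iq_i(x)\,dx=\frac{h_if_i-\alpha_ia_i\sum_{j=1}^Nh_jf_j}{a_i},\qquad i=1,\dots,N.$$ *)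

From Stdlib Require Import Reals Lra.
From Coquelicot Require Import Coquelicot.
Open Scope R_scope.

(* Nodes x : nat -> R, indices 0..N; intervals/maps indexed 1..N. *)

Definition hstep (x : nat -> R) (i : nat) : R := x i - x (i - 1)%nat.

Definition acoef (x : nat -> R) (N i : nat) : R :=
  (x i - x (i - 1)%nat) / (x N - x 0%nat).
Definition bcoef (x : nat -> R) (N i : nat) : R :=
  (x N * x (i - 1)%nat - x 0%nat * x i) / (x N - x 0%nat).
Definition Lmap (x : nat -> R) (N i : nat) (t : R) : R :=
  acoef x N i * t + bcoef x N i.
Definition Linv (x : nat -> R) (N i : nat) (t : R) : R :=
  (t - bcoef x N i) / acoef x N i.

Definition in_Ii (x : nat -> R) (N i : nat) (t : R) : Prop :=
  x (i - 1)%nat <= t /\ (t < x i \/ (i = N /\ t <= x i)).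

Definition lipschitz_on (a b : R) (g : R -> R) : Prop :=
  exists K : R, forall s t, a <= s <= b -> a <= t <= b ->
    Rabs (g s - g t) <= K * Rabs (s - t).

Definition bounded_on (a b : R) (g : R -> R) : Prop :=
  exists M : R, forall t, a <= t <= b -> Rabs (g t) <= M.

Definition total_mass (x : nat -> R) (N : nat) (fh : nat -> R) : R :=
  sum_f_R0 (fun k => hstep x (S k) * fh (S k)) (N - 1)%nat.

(** The fractal function [f] is the fixed point of the Read–Bajraktarević operator
    [T g (t) = alpha_i g (L_i^-1 t) + q_i (L_i^-1 t)] on the piece containing [t].
    [T] maps Riemann-integrable functions to Riemann-integrable functions (affine change
    of variables on each piece) and contracts the sup-distance to [f] by
    [max |alpha_i| < 1], so [f] is a uniform limit of integrable functions and is
    itself integrable.  Changing variables on each piece then gives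
    [int_{I_i} f = a_i (alpha_i int_I f + int_I q_i)]; summing over the pieces, with
    [sum a_i = 1] and [sum a_i (1 - alpha_i) > 0], determines [int_I f], and the
    equivalence is linear algebra. *)

From Stdlib Require Import Reals Lra Lia ClassicalEpsilon.
From Coquelicot Require Import Coquelicot.
Open Scope R_scope.

Lemma sum_f_R0_telescope (u : nat -> R) (n : nat) :
  sum_f_R0 (fun k => u (S k) - u k) n = u (S n) - u 0%nat.
Proof. induction n as [|n IH]; simpl; [ring | rewrite IH; ring]. Qed.

Lemma sum_f_R0_shift_ext (N : nat) (F G : nat -> R) :
  (1 <= N)%nat -> (forall i, (1 <= i <= N)%nat -> F i = G i) ->
  sum_f_R0 (fun k => F (S k)) (N - 1) = sum_f_R0 (fun k => G (S k)) (N - 1).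
Proof. intros HN HFG; apply sum_eq; intros k Hk; apply HFG; lia. Qed.

Lemma contraction_factor (N : nat) (alpha : nat -> R) :
  (forall i, (1 <= i <= N)%nat -> Rabs (alpha i) < 1) ->
  exists c, 0 <= c < 1 /\ forall i, (1 <= i <= N)%nat -> Rabs (alpha i) <= c.
Proof.
  induction N as [|N IH]; intros Hal.
  - exists 0; split; [lra | intros; lia].
  - destruct IH as [c [Hc Hle]]; [intros; apply Hal; lia|].
    exists (Rmax c (Rabs (alpha (S N)))); split.
    + split; [apply Rle_trans with c; [lra | apply Rmax_l]|].
      apply Rmax_lub_lt; [lra | apply Hal; lia].
    + intros i Hi; destruct (Nat.eq_dec i (S N)) as [->|Hne]; [apply Rmax_r|].
      apply Rle_trans with c; [apply Hle; lia | apply Rmax_l].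
Qed.

Lemma is_RInt_comp_affine (F : R -> R) (u v c d l : R) :
  u <> 0 -> is_RInt F (u * c + v) (u * d + v) l ->
  is_RInt (fun t => F (u * t + v)) c d (l / u).
Proof.
  intros Hu HF.
  apply is_RInt_comp_lin, (is_RInt_scal _ _ _ (/ u)) in HF.
  replace (l / u) with (scal (/ u) l) by (unfold scal; simpl; unfold mult; simpl; field; exact Hu).
  eapply is_RInt_ext; [|exact HF].
  intros t _; unfold scal; simpl; unfold mult; simpl; field; exact Hu.
Qed.

Lemma is_RInt_nodes (x : nat -> R) (N : nat) (h : R -> R) (l : nat -> R) :
  (1 <= N)%nat ->
  (forall i, (1 <= i <= N)%nat -> is_RInt h (x (i - 1)%nat) (x i) (l i)) ->
  is_RInt h (x 0%nat) (x N) (sum_f_R0 (fun k => l (S k)) (N - 1)).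
Proof.
  intros HN Hl.
  assert (Hm : forall m, (m < N)%nat ->
            is_RInt h (x 0%nat) (x (S m)) (sum_f_R0 (fun k => l (S k)) m)).
  { induction m as [|m IH]; intros Hm; [exact (Hl 1%nat ltac:(lia))|].
    apply (@is_RInt_Chasles R_NormedModule _ _ (x (S m))); [apply IH; lia|].
    exact (Hl (S (S m)) ltac:(lia)). }
  replace N with (S (N - 1)) at 1 by lia; apply Hm; lia.
Qed.

Definition clamp (a b t : R) : R := Rmax a (Rmin b t).

Lemma clamp_in (a b t : R) : a <= b -> a <= clamp a b t <= b.
Proof. intros; unfold clamp, Rmax, Rmin; repeat destruct Rle_dec; lra. Qed.

Lemma clamp_id (a b t : R) : a <= t <= b -> clamp a b t = t.
Proof. intros; unfold clamp, Rmax, Rmin; repeat destruct Rle_dec; lra. Qed.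

Lemma clamp_dist (a b s t : R) : Rabs (clamp a b s - clamp a b t) <= Rabs (s - t).
Proof.
  unfold clamp, Rmax, Rmin; repeat destruct Rle_dec;
    unfold Rabs; repeat destruct Rcase_abs; lra.
Qed.

Lemma lipschitz_continuous (g : R -> R) (K : R) :
  0 <= K -> (forall s t, Rabs (g s - g t) <= K * Rabs (s - t)) ->
  forall z, continuous g z.
Proof.
  intros HK Hg z; apply continuity_pt_filterlim; intros eps Heps.
  exists (eps / (K + 1)); split; [apply Rdiv_lt_0_compat; lra|].
  intros y [_ Hy]; simpl in Hy; unfold R_dist in Hy.
  assert (Hdy : (K + 1) * Rabs (y - z) < eps).
  { apply (Rmult_lt_compat_l (K + 1)) in Hy; [|lra].
    replace ((K + 1) * (eps / (K + 1))) with eps in Hy by (field; lra); exact Hy. }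
  simpl; unfold R_dist; pose proof (Hg y z); pose proof (Rabs_pos (y - z)); nra.
Qed.

(* Coquelicot's continuity is two-sided, so the function is first extended by
   clamping its argument to [[a, b]]. *)
Lemma lipschitz_on_ex_RInt (a b : R) (g : R -> R) :
  a <= b -> lipschitz_on a b g -> ex_RInt g a b.
Proof.
  intros Hab [K HK].
  apply (ex_RInt_ext (fun t => g (clamp a b t))).
  { intros t Ht; rewrite Rmin_left, Rmax_right in Ht by lra.
    rewrite clamp_id by lra; reflexivity. }
  apply (@ex_RInt_continuous R_CompleteNormedModule); intros z _.
  apply (lipschitz_continuous _ (Rabs K) (Rabs_pos K)); intros s t.
  apply (Rle_trans _ (Rabs K * Rabs (clamp a b s - clamp a b t))).
  - apply (Rle_trans _ _ _ (HK _ _ (clamp_in a b s Hab) (clamp_in a b t Hab))).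
    apply Rmult_le_compat_r; [apply Rabs_pos | apply Rle_abs].
  - apply Rmult_le_compat_l; [apply Rabs_pos | apply clamp_dist].
Qed.

Lemma ex_RInt_geometric_limit (g : nat -> R -> R) (f : R -> R) (a b c M : R) :
  0 <= c < 1 ->
  (forall n, ex_RInt (g n) a b) ->
  (forall n t, Rabs (g n t - f t) <= c ^ n * M) ->
  ex_RInt f a b.
Proof.
  intros Hc Hg Hgf.
  assert (HM : 0 <= M) by (pose proof (Hgf 0%nat 0) as H0; simpl in H0;
                           pose proof (Rabs_pos (g 0%nat 0 - f 0)); lra).
  assert (Hlim : filterlim g eventually (locally (T := fct_UniformSpace R R_UniformSpace) f)).
  { intros P [eps Heps].
    assert (He : 0 < eps / (M + 1)) by (apply Rdiv_lt_0_compat; [apply cond_pos | lra]).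
    destruct (pow_lt_1_zero c ltac:(rewrite Rabs_right; lra) _ He) as [n0 Hn0].
    exists n0; intros n Hn; apply Heps; intros t.
    unfold ball; simpl; unfold AbsRing_ball, abs, minus, plus, opp; simpl.
    specialize (Hn0 n Hn); rewrite Rabs_right in Hn0 by (apply Rle_ge, pow_le; lra).
    assert (Hcn : c ^ n * (M + 1) < eps).
    { apply (Rmult_lt_compat_r (M + 1)) in Hn0; [|lra].
      replace (eps / (M + 1) * (M + 1)) with (pos eps) in Hn0 by (field; lra); exact Hn0. }
    pose proof (Hgf n t); pose proof (pow_le c n ltac:(lra)).
    replace (g n t + - f t) with (g n t - f t) by ring; nra. }
  destruct (filterlim_RInt (V := R_CompleteNormedModule) g a b eventually eventually_filter
              f (fun n => RInt (g n) a b)) as [If [_ HIf]].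
  - intros n; apply RInt_correct, Hg.
  - exact Hlim.
  - exists If; exact HIf.
Qed.

Section Nodes.

Variables (x : nat -> R) (N : nat).
Hypothesis x_incr : forall i, (i < N)%nat -> x i < x (S i).

Lemma nodes_le j k : (j <= k <= N)%nat -> x j <= x k.
Proof.
  revert j; induction k as [|k IH]; intros j Hjk.
  - replace j with 0%nat by lia; lra.
  - destruct (Nat.eq_dec j (S k)) as [->|Hne]; [lra|].
    pose proof (IH j ltac:(lia)); pose proof (x_incr k ltac:(lia)); lra.
Qed.

Lemma nodes_lt j k : (j < k <= N)%nat -> x j < x k.
Proof.
  intros Hjk; destruct k as [|k]; [lia|].
  pose proof (nodes_le j k ltac:(lia)); pose proof (x_incr k ltac:(lia)); lra.
Qed.

Lemma acoef_pos i : (1 <= i <= N)%nat -> 0 < acoef x N i.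
Proof.
  intros Hi; unfold acoef.
  pose proof (nodes_lt 0 N ltac:(lia)); pose proof (nodes_lt (i - 1) i ltac:(lia)).
  apply Rdiv_lt_0_compat; lra.
Qed.

Lemma sum_acoef : (1 <= N)%nat -> sum_f_R0 (fun k => acoef x N (S k)) (N - 1) = 1.
Proof.
  intros HN; pose proof (nodes_lt 0 N ltac:(lia)).
  unfold acoef.
  rewrite (sum_eq _ (fun k => (x (S k) - x k) * / (x N - x 0%nat)))
    by (intros k _; rewrite Nat.sub_succ, Nat.sub_0_r; reflexivity).
  rewrite <- scal_sum, sum_f_R0_telescope.
  replace (S (N - 1)) with N by lia; field; lra.
Qed.

(* [L_i^-1] maps [[x_{i-1}, x_i]] affinely onto [I], with slope [1 / a_i]. *)
Lemma is_RInt_Linv i (F : R -> R) l :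
  (1 <= i <= N)%nat -> is_RInt F (x 0%nat) (x N) l ->
  is_RInt (fun t => F (Linv x N i t)) (x (i - 1)%nat) (x i) (acoef x N i * l).
Proof.
  intros Hi HF; pose proof (nodes_lt 0 N ltac:(lia)); pose proof (acoef_pos i Hi).
  set (u := / acoef x N i); set (v := - bcoef x N i / acoef x N i).
  assert (Hu : u <> 0) by (apply Rinv_neq_0_compat; lra).
  replace (acoef x N i * l) with (l / u) by (unfold u; field; lra).
  apply (is_RInt_ext (fun t => F (u * t + v))).
  { intros t _; unfold Linv, u, v; f_equal; field; lra. }
  apply is_RInt_comp_affine; [exact Hu|].
  replace (u * x (i - 1)%nat + v) with (x 0%nat)
    by (unfold u, v, acoef, bcoef; field; pose proof (nodes_lt (i - 1) i ltac:(lia)); lra).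
  replace (u * x i + v) with (x N)
    by (unfold u, v, acoef, bcoef; field; pose proof (nodes_lt (i - 1) i ltac:(lia)); lra).
  exact HF.
Qed.

Lemma ex_RInt_piece (h : R -> R) i :
  (1 <= i <= N)%nat -> ex_RInt h (x 0%nat) (x N) -> ex_RInt h (x (i - 1)%nat) (x i).
Proof.
  intros Hi Hh.
  pose proof (nodes_le 0 (i - 1) ltac:(lia)); pose proof (nodes_le (i - 1) i ltac:(lia)).
  pose proof (nodes_le i N ltac:(lia)).
  apply (@ex_RInt_Chasles_2 R_CompleteNormedModule _ (x 0%nat)); [lra|].
  apply (@ex_RInt_Chasles_1 R_CompleteNormedModule _ _ _ (x N)); [lra | exact Hh].
Qed.

Lemma RInt_nodes_sum (h : R -> R) :
  (1 <= N)%nat -> ex_RInt h (x 0%nat) (x N) ->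
  RInt h (x 0%nat) (x N) = sum_f_R0 (fun k => RInt h (x (S k - 1)%nat) (x (S k))) (N - 1).
Proof.
  intros HN Hh; apply (@is_RInt_unique R_CompleteNormedModule).
  apply (is_RInt_nodes x N h (fun i => RInt h (x (i - 1)%nat) (x i)) HN).
  intros i Hi; apply (@RInt_correct R_CompleteNormedModule), ex_RInt_piece; assumption.
Qed.

End Nodes.

Section FractalFunction.

Variables (N : nat) (x : nat -> R) (alpha : nat -> R) (q : nat -> R -> R) (f : R -> R).
Hypothesis x_incr : forall i, (i < N)%nat -> x i < x (S i).
Hypothesis q_int : forall i, (1 <= i <= N)%nat -> ex_RInt (q i) (x 0%nat) (x N).
Hypothesis f_fixed : forall i t, (1 <= i <= N)%nat -> in_Ii x N i t ->
  f t = alpha i * f (Linv x N i t) + q i (Linv x N i t).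

Definition piece_index (t : R) : nat :=
  epsilon (inhabits 0%nat) (fun k => (1 <= k <= N)%nat /\ in_Ii x N k t).

(* Off the pieces, i.e. off [I], the operator returns [f] itself, so that iterates
   stay uniformly close to [f] on all of [R]. *)
Definition rb_map (g : R -> R) (t : R) : R :=
  let i := piece_index t in
  if excluded_middle_informative ((1 <= i <= N)%nat /\ in_Ii x N i t)
  then alpha i * g (Linv x N i t) + q i (Linv x N i t)
  else f t.

Lemma piece_index_open i t :
  (1 <= i <= N)%nat -> x (i - 1)%nat < t < x i -> piece_index t = i.
Proof.
  intros Hi Ht.
  assert (Hin : (1 <= i <= N)%nat /\ in_Ii x N i t) by (split; [exact Hi | split; [lra | left; lra]]).
  destruct (epsilon_spec (inhabits 0%nat)
              (fun k => (1 <= k <= N)%nat /\ in_Ii x N k t) (ex_intro _ i Hin))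
    as [Hj [Hj1 Hj2]].
  fold (piece_index t) in Hj, Hj1, Hj2 |- *.
  set (j := piece_index t) in *.
  destruct (Compare_dec.lt_eq_lt_dec j i) as [[Hlt|Heq]|Hgt]; [|exact Heq|].
  - pose proof (nodes_le x N x_incr j (i - 1) ltac:(lia)).
    destruct Hj2 as [Hj2|[Hj2 _]]; [lra | lia].
  - pose proof (nodes_le x N x_incr i (j - 1) ltac:(lia)); lra.
Qed.

Lemma rb_map_open g i t :
  (1 <= i <= N)%nat -> x (i - 1)%nat < t < x i ->
  rb_map g t = alpha i * g (Linv x N i t) + q i (Linv x N i t).
Proof.
  intros Hi Ht; unfold rb_map; rewrite (piece_index_open i t Hi Ht).
  destruct excluded_middle_informative as [_|Hn]; [reflexivity|].
  exfalso; apply Hn; split; [exact Hi | split; [lra | left; lra]].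
Qed.

Lemma rb_map_ex_RInt g :
  (1 <= N)%nat -> ex_RInt g (x 0%nat) (x N) -> ex_RInt (rb_map g) (x 0%nat) (x N).
Proof.
  intros HN Hg.
  set (G i s := alpha i * g s + q i s).
  eexists; apply (is_RInt_nodes x N _ (fun i => acoef x N i * RInt (G i) (x 0%nat) (x N)) HN).
  intros i Hi; pose proof (nodes_lt x N x_incr (i - 1) i ltac:(lia)).
  apply (is_RInt_ext (fun t => G i (Linv x N i t))).
  { intros t Ht; rewrite Rmin_left, Rmax_right in Ht by lra.
    symmetry; apply rb_map_open; assumption. }
  apply (is_RInt_Linv x N x_incr i _ _ Hi), (@RInt_correct R_CompleteNormedModule).
  apply (@ex_RInt_plus R_NormedModule); [apply (@ex_RInt_scal R_NormedModule), Hg|].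
  apply q_int, Hi.
Qed.

Lemma rb_map_contract (c B : R) g :
  0 <= c -> (forall i, (1 <= i <= N)%nat -> Rabs (alpha i) <= c) ->
  (forall t, Rabs (g t - f t) <= B) ->
  forall t, Rabs (rb_map g t - f t) <= c * B.
Proof.
  intros Hc0 Hc HB t.
  assert (HB0 : 0 <= B) by (pose proof (HB 0); pose proof (Rabs_pos (g 0 - f 0)); lra).
  unfold rb_map; set (i := piece_index t).
  destruct excluded_middle_informative as [[Hi Hin]|_].
  - rewrite (f_fixed i t Hi Hin).
    replace (_ - _) with (alpha i * (g (Linv x N i t) - f (Linv x N i t))) by ring.
    rewrite Rabs_mult; apply Rmult_le_compat; try apply Rabs_pos; auto.
  - rewrite Rminus_diag, Rabs_R0; nra.
Qed.

Definition rb_start (t : R) : R :=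
  if excluded_middle_informative (x 0%nat <= t <= x N) then 0 else f t.

Lemma fractal_ex_RInt :
  (1 <= N)%nat ->
  (forall i, (1 <= i <= N)%nat -> Rabs (alpha i) < 1) ->
  bounded_on (x 0%nat) (x N) f ->
  ex_RInt f (x 0%nat) (x N).
Proof.
  intros HN Hal [M HM].
  destruct (contraction_factor N alpha Hal) as [c [Hc Hle]].
  pose proof (nodes_lt x N x_incr 0 N ltac:(lia)).
  apply (ex_RInt_geometric_limit (fun n => Nat.iter n rb_map rb_start) f _ _ c (Rabs M) Hc).
  - induction n as [|n IH]; simpl; [|apply rb_map_ex_RInt; assumption].
    apply (ex_RInt_ext (fun _ => 0)); [|apply ex_RInt_const].
    intros t Ht; rewrite Rmin_left, Rmax_right in Ht by lra.
    unfold rb_start; destruct excluded_middle_informative; [reflexivity | lra].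
  - induction n as [|n IH]; intros t; simpl.
    + unfold rb_start; destruct excluded_middle_informative as [Ht|_].
      * rewrite Rminus_0_l, Rabs_Ropp, Rmult_1_l.
        apply (Rle_trans _ _ _ (HM t Ht) (Rle_abs M)).
      * rewrite Rminus_diag, Rabs_R0, Rmult_1_l; apply Rabs_pos.
    + rewrite Rmult_assoc; apply rb_map_contract; [lra | exact Hle | exact IH].
Qed.

Lemma RInt_fractal_piece i :
  (1 <= i <= N)%nat -> ex_RInt f (x 0%nat) (x N) ->
  RInt f (x (i - 1)%nat) (x i)
  = acoef x N i * (alpha i * RInt f (x 0%nat) (x N) + RInt (q i) (x 0%nat) (x N)).
Proof.
  intros Hi Hf; pose proof (nodes_lt x N x_incr (i - 1) i ltac:(lia)).
  apply (@is_RInt_unique R_CompleteNormedModule).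
  apply (is_RInt_ext (fun t => alpha i * f (Linv x N i t) + q i (Linv x N i t))).
  { intros t Ht; rewrite Rmin_left, Rmax_right in Ht by lra.
    symmetry; apply f_fixed; [exact Hi | split; [lra | left; lra]]. }
  apply (is_RInt_Linv x N x_incr i (fun s => alpha i * f s + q i s) _ Hi).
  apply (@is_RInt_plus R_NormedModule (fun s => alpha i * f s)).
  - apply (@is_RInt_scal R_NormedModule f), (@RInt_correct R_CompleteNormedModule), Hf.
  - apply (@RInt_correct R_CompleteNormedModule), q_int, Hi.
Qed.

End FractalFunction.

Lemma piece_masses_iff (N : nat) (a alpha Q P m : nat -> R) (T : R) :
  (1 <= N)%nat ->
  (forall i, (1 <= i <= N)%nat -> 0 < a i) ->
  (forall i, (1 <= i <= N)%nat -> Rabs (alpha i) < 1) ->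
  sum_f_R0 (fun k => a (S k)) (N - 1) = 1 ->
  T = sum_f_R0 (fun k => P (S k)) (N - 1) ->
  (forall i, (1 <= i <= N)%nat -> P i = a i * (alpha i * T + Q i)) ->
  (forall i, (1 <= i <= N)%nat -> P i = m i) <->
  (forall i, (1 <= i <= N)%nat ->
     Q i = (m i - alpha i * a i * sum_f_R0 (fun k => m (S k)) (N - 1)) / a i).
Proof.
  intros HN Ha Hal Hsa HT HP.
  set (Tm := sum_f_R0 (fun k => m (S k)) (N - 1)).
  split.
  - intros HPm i Hi.
    assert (HTm : T = Tm) by (rewrite HT; apply sum_f_R0_shift_ext; assumption).
    rewrite <- (HPm i Hi), (HP i Hi), HTm.
    field; apply Rgt_not_eq, Ha, Hi.
  - intros HQ.
    assert (HPi : forall i, (1 <= i <= N)%nat ->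
              P i = m i + alpha i * a i * (T - Tm)).
    { intros i Hi; rewrite HP, HQ by exact Hi.
      field; apply Rgt_not_eq, Ha, Hi. }
    set (Aa := sum_f_R0 (fun k => alpha (S k) * a (S k)) (N - 1)).
    assert (HTsum : T = Tm + (T - Tm) * Aa).
    { rewrite HT at 1; rewrite (sum_f_R0_shift_ext N P _ HN HPi).
      rewrite sum_plus; unfold Aa; rewrite scal_sum; reflexivity. }
    assert (HAa : 0 < 1 - Aa).
    { rewrite <- Hsa; unfold Aa; rewrite <- minus_sum.
      apply tech1; intros k Hk.
      assert (0 < a (S k)) by (apply Ha; lia).
      assert (Rabs (alpha (S k)) < 1) by (apply Hal; lia).
      pose proof (Rle_abs (alpha (S k))); nra. }
    assert (HTm : T = Tm).
    { assert (Hprod : (T - Tm) * (1 - Aa) = 0) by lra.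
      destruct (Rmult_integral _ _ Hprod); lra. }
    intros i Hi; rewrite HPi, HTm by exact Hi; ring.
Qed.

Theorem mainTheorem8
  (N : nat) (x : nat -> R) (fh : nat -> R) (alpha : nat -> R)
  (q : nat -> R -> R) (f : R -> R) :
  (2 <= N)%nat ->
  (forall i, (i < N)%nat -> x i < x (S i)) ->
  (forall i, (1 <= i <= N)%nat -> Rabs (alpha i) < 1) ->
  (forall i, (1 <= i <= N)%nat -> lipschitz_on (x 0%nat) (x N) (q i)) ->
  bounded_on (x 0%nat) (x N) f ->
  (forall i t, (1 <= i <= N)%nat -> in_Ii x N i t ->
     f t = alpha i * f (Linv x N i t) + q i (Linv x N i t)) ->
  ((forall i, (1 <= i <= N)%nat ->
      RInt f (x (i - 1)%nat) (x i) = hstep x i * fh i)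
   <->
   (forall i, (1 <= i <= N)%nat ->
      RInt (q i) (x 0%nat) (x N)
      = (hstep x i * fh i - alpha i * acoef x N i * total_mass x N fh)
          / acoef x N i)).
Proof.
  intros HN Hinc Hal Hlip Hbd Hfix.
  assert (HN1 : (1 <= N)%nat) by lia.
  assert (Hq : forall i, (1 <= i <= N)%nat -> ex_RInt (q i) (x 0%nat) (x N)).
  { intros i Hi; apply lipschitz_on_ex_RInt; [apply (nodes_le x N Hinc); lia | apply Hlip, Hi]. }
  assert (Hf := fractal_ex_RInt N x alpha q f Hinc Hq Hfix HN1 Hal Hbd).
  apply (piece_masses_iff N (acoef x N) alpha (fun i => RInt (q i) (x 0%nat) (x N))
           (fun i => RInt f (x (i - 1)%nat) (x i)) (fun i => hstep x i * fh i)
           (RInt f (x 0%nat) (x N)) HN1).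
  - exact (acoef_pos x N Hinc).
  - exact Hal.
  - exact (sum_acoef x N Hinc HN1).
  - exact (RInt_nodes_sum x N Hinc f HN1 Hf).
  - intros i Hi; exact (RInt_fractal_piece N x alpha q f Hinc Hq Hfix i Hi Hf).
Qed.
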